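(* For $q\ge1$, let a $q$-prime factor be a word $0^a1^b$ with $b\ge0$ and $a=\lfloor b/q\rfloor+1$. The bivariate generating function $S_q(x,y)=\sum_{n,k\ge0}s_{n,k}x^ny^k$, where $s_{n,k}$ is the number of $q$-prime factors of length $n$ having exactly $k$ letters $1$, is $$S_q(x,y)=\frac{x\left(1-(xy)^q\right)}{(xy-1)(x^{q+1}y^q-1)}.$$
   Context: Exponents denote repetition of letters: $0^a1^b$ is $a$ zeros followed by $b$ ones. *)

From mathcomp Require Import all_boot all_algebra.
Set Implicit Arguments. Unset Strict Implicit. Unset Printing Implicit Defensive.
Import GRing.Theory.
Local Open Scope ring_scope.

(* Words over {0,1}: a letter is a bool, [false] = 0, [true] = 1. *)

(* w is a q-prime factor: w = 0^a 1^b with b >= 0 and a = floor(b/q)+1.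
   (b is necessarily <= size w, so the bounded existential is harmless.) *)
Definition qprime_factor (q : nat) (w : seq bool) : bool :=
  [exists b : 'I_(size w).+1,
     w == nseq ((b %/ q).+1)%N false ++ nseq b true].

Definition s_coef (q n k : nat) : int :=
  (#|[set w : n.-tuple bool | qprime_factor q w && (count id w == k)]|)%:Z.

(* Formal power series in two variables x, y with integer coefficients:
   f n k is the coefficient of x^n y^k. *)
Definition fps2 := nat -> nat -> int.

Definition fps_add (f g : fps2) : fps2 := fun n k => f n k + g n k.
Definition fps_opp (f : fps2) : fps2 := fun n k => - f n k.
Definition fps_sub (f g : fps2) : fps2 := fps_add f (fps_opp g).
Definition fps_mul (f g : fps2) : fps2 := fun n k =>
  \sum_(i < n.+1) \sum_(j < k.+1) f i j * g (n - i)%N (k - j)%N.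
Definition fps_one : fps2 := fun n k => ((n == 0%N) && (k == 0%N))%:R.
Definition fps_mon (a b : nat) : fps2 := fun n k => ((n == a) && (k == b))%:R.
Definition fps_x : fps2 := fps_mon 1 0.
Definition fps_y : fps2 := fps_mon 0 1.
Definition fps_exp (f : fps2) (m : nat) : fps2 := iter m (fps_mul f) fps_one.

Definition S_gf (q : nat) : fps2 := fun n k => s_coef q n k.

(* The q-prime factor with k ones is unique, of length L(k) = floor(k/q) + 1 + k,
   so S_q = sum_k x^L(k) y^k.  Since L(k + q) = L(k) + q + 1, multiplying by
   x^{q+1} y^q - 1 cancels every term with k >= q and leaves
   -(x + x^2 y + ... + x^q y^{q-1}); multiplying that by xy - 1 telescopes to
   x - x^{q+1} y^q. *)
From mathcomp Require Import all_boot all_algebra.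
From mathcomp Require Import zify ring.
From Stdlib Require Import FunctionalExtensionality.
Import GRing.Theory.

Definition qprime_word (q k : nat) : seq bool :=
  nseq (k %/ q).+1 false ++ nseq k true.

Lemma size_qprime_word (q k : nat) : size (qprime_word q k) = ((k %/ q).+1 + k)%N.
Proof. by rewrite size_cat !size_nseq. Qed.

Lemma count_qprime_word (q k : nat) : count id (qprime_word q k) = k.
Proof. by rewrite count_cat !count_nseq /= mul0n mul1n. Qed.

Lemma qprime_factor_countE (q k : nat) (w : seq bool) :
  qprime_factor q w && (count id w == k) = (w == qprime_word q k).
Proof.
apply/idP/eqP => [/andP[/existsP[b /eqP ->]] | ->].
  by rewrite -/(qprime_word q b) count_qprime_word => /eqP <-.
rewrite count_qprime_word eqxx andbT; apply/existsP.
have k_lt : (k < (size (qprime_word q k)).+1)%N by rewrite size_qprime_word ltnS leq_addl.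
by exists (Ordinal k_lt).
Qed.

Lemma card_tuple_val_eq (T : finType) (n : nat) (u : seq T) :
  #|[set w : n.-tuple T | val w == u]| = (size u == n).
Proof.
have [/eqP szu | szu] := eqVneq (size u) n.
  apply: eq_trans (cards1 (Tuple szu)); apply: eq_card => w.
  by rewrite !inE -val_eqE.
apply: eq_trans (cards0 _); apply: eq_card => w.
rewrite !inE; apply/negbTE/eqP => wu.
by move: szu; rewrite -wu size_tuple eqxx.
Qed.

Local Open Scope ring_scope.

Lemma s_coefE (q n k : nat) : s_coef q n k = (n == (k %/ q).+1 + k)%N%:R.
Proof.
rewrite /s_coef -natz.
under eq_finset => w do rewrite qprime_factor_countE.
by rewrite card_tuple_val_eq size_qprime_word eq_sym.
Qed.

Lemma qprime_length_addq (q k : nat) : (0 < q)%N ->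
  (((k + q) %/ q).+1 + (k + q) = (k %/ q).+1 + k + q.+1)%N.
Proof. by move=> q_gt0; rewrite divnDr // divnn q_gt0; lia. Qed.

Lemma fps_subE (f g : fps2) (n k : nat) : fps_sub f g n k = f n k - g n k.
Proof. by []. Qed.

Lemma fps_ext (f g : fps2) : (forall n k, f n k = g n k) -> f = g.
Proof. by move=> fg; do 2!apply: functional_extensionality => ?; apply: fg. Qed.

Lemma sum_ord_subn_eq (R : pzSemiRingType) (m a : nat) (G : nat -> R) :
  \sum_(i < m.+1) (m - i == a)%N%:R * G i = if (a <= m)%N then G (m - a)%N else 0.
Proof.
have [a_le | a_gt] := leqP a m; last first.
  by rewrite big1 // => i _; rewrite (_ : (m - i == a)%N = false) ?mul0r //; lia.
have i0_lt : (m - a < m.+1)%N by lia.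
rewrite (bigD1 (Ordinal i0_lt)) //= subKn // eqxx mul1r big1 ?addr0 // => i ne_i0.
rewrite (_ : (m - i == a)%N = false) ?mul0r //; apply/negbTE/eqP => mia.
by move: ne_i0; rewrite -val_eqE /= -mia subKn ?eqxx // -ltnS.
Qed.

Lemma fps_mul_monE (f : fps2) (a b n k : nat) :
  fps_mul f (fps_mon a b) n k =
  if (a <= n)%N && (b <= k)%N then f (n - a)%N (k - b)%N else 0.
Proof.
rewrite /fps_mul; under eq_bigr => i _ do under eq_bigr => j _ do
  rewrite /fps_mon mulrC -mulnb natrM -mulrA.
under eq_bigr => i _ do rewrite -mulr_sumr.
rewrite (@sum_ord_subn_eq _ n a (fun i => \sum_(j < k.+1) (k - j == b)%N%:R * f i j)).
by case: leqP => //= _; rewrite (@sum_ord_subn_eq _ k b (f (n - a)%N)).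
Qed.

Lemma fps_mul_mon (a b c d : nat) :
  fps_mul (fps_mon a b) (fps_mon c d) = fps_mon (a + c) (b + d).
Proof.
apply: fps_ext => n k; rewrite fps_mul_monE /fps_mon.
case: ifP => cd_le.
  by rewrite (_ : (n - c == a) && (k - d == b) = (n == a + c) && (k == b + d))%N //;
    apply/idP/idP; lia.
by rewrite (_ : (n == a + c) && (k == b + d) = false)%N //; apply/negbTE; lia.
Qed.

Lemma fps_one_mon : fps_one = fps_mon 0 0. Proof. by []. Qed.

Lemma fps_exp_mon (a b m : nat) : fps_exp (fps_mon a b) m = fps_mon (a * m) (b * m).
Proof.
elim: m => [|m IHm]; first by rewrite !muln0.
by rewrite /fps_exp iterS -/(fps_exp _ m) IHm fps_mul_mon !mulnS.
Qed.

Lemma fps_mul_subr (f g h : fps2) :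
  fps_mul f (fps_sub g h) = fps_sub (fps_mul f g) (fps_mul f h).
Proof.
apply: fps_ext => n k; rewrite /fps_sub /fps_add /fps_opp /fps_mul -sumrB.
by apply: eq_bigr => i _; rewrite -sumrB; apply: eq_bigr => j _; rewrite mulrBr.
Qed.

Lemma fps_mul_subl (f g h : fps2) :
  fps_mul (fps_sub g h) f = fps_sub (fps_mul g f) (fps_mul h f).
Proof.
apply: fps_ext => n k; rewrite /fps_sub /fps_add /fps_opp /fps_mul -sumrB.
by apply: eq_bigr => i _; rewrite -sumrB; apply: eq_bigr => j _; rewrite mulrBl.
Qed.

Lemma fps_mulr1 (f : fps2) : fps_mul f fps_one = f.
Proof. by apply: fps_ext => n k; rewrite fps_one_mon fps_mul_monE !subn0. Qed.

Lemma fps_mul_monA (f : fps2) (a b c d : nat) :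
  fps_mul (fps_mul f (fps_mon a b)) (fps_mon c d) = fps_mul f (fps_mon (a + c) (b + d)).
Proof.
apply: fps_ext => n k; rewrite !fps_mul_monE.
case: ifP => cd_le; last by rewrite (_ : _ && _ = false) //; apply/negbTE; lia.
rewrite -!subnDA (addnC c) (addnC d); congr (if _ then _ else _); apply/idP/idP; lia.
Qed.

Definition fps_xgeom (q : nat) : fps2 := fun n k => ((k < q)%N && (n == k.+1))%:R.

Lemma S_gf_mul_period (q : nat) : (0 < q)%N ->
  fps_mul (S_gf q) (fps_sub (fps_mon q.+1 q) fps_one) = fps_opp (fps_xgeom q).
Proof.
move=> q_gt0; apply: fps_ext => n k.
rewrite fps_mul_subr fps_mulr1 fps_subE fps_mul_monE /S_gf /fps_opp /fps_xgeom !s_coefE.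
have [k_lt | k_ge] := ltnP k q.
  by rewrite andbF add0r divn_small.
rewrite -(subnK k_ge) qprime_length_addq // addnK andbT /= oppr0.
set L := (((k - q) %/ q).+1 + (k - q))%N.
have [n_ge | n_lt] := ltnP q n.
  by rewrite -(eqn_add2r q.+1) subnK // subrr.
by rewrite (_ : (n == L + q.+1)%N = false) ?subrr //; apply/negbTE; lia.
Qed.

Lemma fps_xgeom_telescope (q : nat) :
  fps_mul (fps_opp (fps_xgeom q)) (fps_sub (fps_mon 1 1) fps_one)
  = fps_sub (fps_mon 1 0) (fps_mon q.+1 q).
Proof.
apply: fps_ext => n k.
rewrite fps_mul_subr fps_mulr1 !fps_subE fps_mul_monE /fps_mon /fps_opp /fps_xgeom.
case: n => [|n]; case: k => [|k]; rewrite ?subn1 /= ?andbF ?oppr0 ?subrr ?eqSS //.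
  by case: q => [|q]; rewrite ?andbF ?andbT /= ?oppr0 ?subr0 ?sub0r ?opprK ?subrr.
have [_ | _ | <-] := ltngtP k.+1 q; rewrite ?andbF ?subrr //.
by rewrite /= oppr0 subr0 sub0r andbT.
Qed.

Theorem lemma2 (q : nat) (hq : (1 <= q)%N) :
  fps_mul (S_gf q)
          (fps_mul (fps_sub (fps_mul fps_x fps_y) fps_one)
                   (fps_sub (fps_mul (fps_exp fps_x q.+1) (fps_exp fps_y q)) fps_one))
  = fps_mul fps_x (fps_sub fps_one (fps_exp (fps_mul fps_x fps_y) q)).
Proof.
rewrite /fps_x /fps_y !fps_mul_mon !fps_exp_mon !fps_mul_mon.
rewrite !(addn0, add0n, mul0n, mul1n).
transitivity (fps_mul (fps_mul (S_gf q) (fps_sub (fps_mon q.+1 q) fps_one))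
                      (fps_sub (fps_mon 1 1) fps_one)).
  rewrite fps_one_mon !(fps_mul_subl, fps_mul_subr) !fps_mul_monA !fps_mul_mon.
  rewrite !(addn0, add0n, addn1, add1n).
  by apply: fps_ext => n k; rewrite !fps_subE; ring.
rewrite S_gf_mul_period // fps_xgeom_telescope.
by rewrite fps_one_mon fps_mul_subr !fps_mul_mon.
Qed.
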